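(* For every $m\ge 1$, $$\mathscr{T}_m=\left\{\tau_1^{\epsilon_1}\circ\tau_2^{\epsilon_2}\circ\cdots\circ\tau_m^{\epsilon_m}\ \middle|\ \epsilon_1,\ldots,\epsilon_m\in\{1,2\}\right\}.$$ (Since $\tau_i^2$ is the identity, this is the set of all products $\tau_{i_1}\circ\cdots\circ\tau_{i_k}$ with $i_1<\cdots<i_k$, including the empty product.)
   Context: $\mathcal{S}_m$ is the group of bijections of $I_m=\{1,\ldots,m\}$, with $\sigma\circ\tau$ meaning apply $\tau$ first, then $\sigma$. $\mathscr{T}_m=\{\sigma\in\mathcal{S}_m \mid \exists t\in I_m:\ \sigma(1)>\sigma(2)>\cdots>\sigma(t)=1,\ \sigma(t)<\sigma(t+1)<\cdots<\sigma(m)\}$. For $i\in I_m$, $\tau_i\in\mathcal{S}_m$ is defined by $\tau_i(j)=i+1-j$ for $1\le j\le i$ and $\tau_i(j)=j$ for $j>i$. *)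

From mathcomp Require Import all_boot all_fingroup.
From Stdlib Require Import Lia.
Set Implicit Arguments. Unset Strict Implicit. Unset Printing Implicit Defensive.

(* Conventions: I_m = {1,...,m} is represented by 'I_m = {0,...,m-1} via
   k <-> k+1.  S_m is {perm 'I_m}.  Paper composition (sigma o tau)
   "apply tau first" is mathcomp's (tau * sigma)%g. *)

Local Open Scope group_scope.

Definition compp m (s t : {perm 'I_m}) : {perm 'I_m} := t * s.

Definition in_Tm m (s : {perm 'I_m}) : Prop :=
  exists t : 'I_m,
    val (s t) = 0%N /\
    (forall i j : 'I_m, (i < j)%N -> (j <= t)%N -> (val (s j) < val (s i))%N) /\
    (forall i j : 'I_m, (t <= i)%N -> (i < j)%N -> (val (s i) < val (s j))%N).

(* tau_i for i in {1..m} (given as a nat): tau_i(j) = i+1-j for j <= i,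
   j otherwise; 0-based: j |-> i-1-j for j < i, j otherwise. *)
Definition tau_fun m (i : nat) (j : 'I_m) : 'I_m :=
  if (j < i)%N then insubd j (i.-1 - j) else j.

Lemma tau_fun_inj m (i : nat) : (i <= m)%N -> injective (@tau_fun m i).
Proof.
move=> im j k; rewrite /tau_fun.
have H : forall x : 'I_m, (x < i)%N -> val (insubd x (i.-1 - x) : 'I_m) = i.-1 - x.
  move=> x xi; rewrite val_insubd; case: ifP => // /negP; case.
  have := ltn_ord x; move: xi im => /ltP xi /leP im /ltP xm; apply/ltP.
  rewrite -subn1 -!minusE; lia.
have xx := ltn_ord j; have yy := ltn_ord k.
case: (ltnP j i) => ji; case: (ltnP k i) => ki => e; apply: val_inj;
  move: (congr1 val e); rewrite ?H //;
  move: ji ki xx yy im; rewrite -?subn1 -?minusE /=;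
  case: j e => j /= ? e; case: k e => k /= ? e;
  move=> /leP ? /leP ? /leP ? /leP ? /leP ? ?; lia.
Qed.

(* tau_i as a permutation, for 1 <= i <= m (i : 'I_m represents i+1). *)
Definition tau m (i : 'I_m) : {perm 'I_m} :=
  perm (@tau_fun_inj m i.+1 (ltn_ord i)).

(* tau_1^{e_1} o tau_2^{e_2} o ... o tau_m^{e_m}, with e : 'I_m -> 'I_2
   and exponent (e i).+1 in {1,2}. *)
Definition tau_prod m (e : 'I_m -> 'I_2) : {perm 'I_m} :=
  foldr (fun i acc => compp ((tau i) ^+ (e i).+1) acc) 1 (enum 'I_m).

From mathcomp Require Import all_boot all_fingroup.
From mathcomp Require Import zify.
From Stdlib Require Import Lia.
Set Implicit Arguments. Unset Strict Implicit. Unset Printing Implicit Defensive.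

(* Call s a valley on [0, k) if it fixes every point from k on and, on [0, k),
   decreases down to the value 0 and then increases.  By induction on k, the
   valleys on [0, k) are exactly the partial products
   tau_1^e_1 o ... o tau_k^e_k.  Precomposing with tau_k reverses the first k
   values, which turns a valley on [0, k) into another one.  Conversely, the
   largest value k - 1 of a valley on [0, k) sits at one of the two ends:
   either at position k - 1, and we may shrink the interval, or at position 0,
   and precomposing with tau_k moves it to position k - 1. *)

Local Open Scope group_scope.

Section Flips.
Variable m : nat.
Implicit Types (i j : 'I_m) (e : 'I_m -> 'I_2).

Lemma tauE i j : tau i j = (if j <= i then i - j else j) :> nat.
Proof.
rewrite /tau permE /tau_fun ltnS; case: ifP => // ji; rewrite val_insubd.
by have := ltn_ord i; case: ifP => //; lia.
Qed.

Lemma tau_invol i : tau i * tau i = 1.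
Proof.
apply/permP => j; apply: ord_inj; rewrite permM perm1 tauE [nat_of_ord (tau i j)]tauE.
by case: (leqP j i) => ji; rewrite ?leq_subr ?subKn // leqNgt ji.
Qed.

Lemma tauK i : involutive (tau i).
Proof. by move=> j; rewrite -permM tau_invol perm1. Qed.

Definition tau_prefix e k : {perm 'I_m} :=
  foldr (fun i acc => compp (tau i ^+ (e i).+1) acc) 1 (take k (enum 'I_m)).

Lemma tau_prod_prefix e : tau_prod e = tau_prefix e m.
Proof. by rewrite /tau_prefix take_oversize ?size_enum_ord. Qed.

Lemma tau_prefix0 e : tau_prefix e 0 = 1.
Proof. by rewrite /tau_prefix take0. Qed.

Lemma tau_prefixS e i : tau_prefix e i.+1 = tau i ^+ (e i).+1 * tau_prefix e i.
Proof.
have foldr_mul a r : foldr (fun i acc => compp (tau i ^+ (e i).+1) acc) a r =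
    a * foldr (fun i acc => compp (tau i ^+ (e i).+1) acc) 1 r.
  by elim: r => [|x r IH] /=; rewrite ?mulg1 // /compp IH mulgA.
rewrite /tau_prefix (take_nth i) ?size_enum_ord // foldr_rcons foldr_mul.
by rewrite nth_ord_enum /compp mul1g.
Qed.

Lemma eq_tau_prefix e e' k : k <= m -> (forall i, i < k -> e i = e' i) ->
  tau_prefix e k = tau_prefix e' k.
Proof.
elim: k => [|k IH] km ee'; first by rewrite !tau_prefix0.
have -> : k = Ordinal km by [].
rewrite !tau_prefixS ee' //= IH ?(ltnW km) // => i ik; apply: ee'; lia.
Qed.

Lemma tau_prefix_set e i (x : 'I_2) :
  tau_prefix (fun j => if j == i then x else e j) i.+1 = tau i ^+ x.+1 * tau_prefix e i.
Proof.
rewrite tau_prefixS eqxx; congr (_ * _); apply: eq_tau_prefix (ltnW (ltn_ord i)) _.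
by move=> j ji; rewrite ifN // neq_ltn ji.
Qed.

End Flips.

Lemma fixed_above_lt m (s : {perm 'I_m}) k (i : 'I_m) :
  (forall j : 'I_m, k <= j -> s j = j) -> i < k -> s i < k.
Proof.
move=> fix_s ik; rewrite ltnNge; apply/negP => ksi.
by move: ik; rewrite -(perm_inj (fix_s _ ksi)) ltnNge ksi.
Qed.

Section Valleys.
Variable n : nat.
Local Notation m := n.+1.
Implicit Types (s : {perm 'I_m}) (e : 'I_m -> 'I_2).

Definition valley k s : Prop :=
  (forall j : 'I_m, k <= j -> s j = j) /\
  exists t : 'I_m, s t = 0 :> nat /\
    (forall i j : 'I_m, i < j -> j <= t -> s j < s i) /\
    (forall i j : 'I_m, t <= i -> i < j -> j < k -> s i < s j).

Lemma in_Tm_valley s : in_Tm s <-> valley m s.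
Proof.
split=> [[t [s_t [dec inc]]] | [_ [t [s_t [dec inc]]]]].
  split=> [j|]; first by have := ltn_ord j; lia.
  by exists t; split=> //; split=> // i j ti ij _; apply: inc.
by exists t; split=> //; split=> // i j ti ij; apply: inc.
Qed.

Lemma valley0 : valley 0 1.
Proof.
split=> [j _|]; first by rewrite perm1.
by exists ord0; rewrite !perm1; split=> //; split=> i j /=; lia.
Qed.

Lemma valleyS k s : valley k s -> valley k.+1 s.
Proof.
move=> [fix_s [t [s_t [dec inc]]]]; split=> [j kj|]; first by apply: fix_s; lia.
exists t; split=> //; split=> // i j ti ij jk; case: (ltnP j k) => [|kj]; first exact: inc.
rewrite (fix_s j kj); have := @fixed_above_lt _ s k i fix_s; lia.
Qed.

Lemma valley_flip (i : 'I_m) s : valley i.+1 s -> valley i.+1 (tau i * s).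
Proof.
move=> [fix_s [t [s_t [dec inc]]]].
have ti : t <= i by case: (leqP t i) => // it; move: s_t; rewrite fix_s //= => t0; lia.
split=> [j ij|].
  have tau_j : tau i j = j by apply: ord_inj; rewrite tauE ifN //; lia.
  by rewrite permM tau_j fix_s.
exists (tau i t); rewrite permM tauK; split=> //.
split=> a b; rewrite !permM tauE ti.
  by move=> ab bt; apply: inc; rewrite ?tauE; do !case: ifP; lia.
by move=> ta ab bi; apply: dec; rewrite ?tauE; do !case: ifP; lia.
Qed.

Lemma valley_narrow (i : 'I_m) s : valley i.+1 s -> s i = i -> valley i s.
Proof.
move=> [fix_s [t [s_t [dec inc]]]] s_i; split=> [j ij|].
  case: (eqVneq j i) => [-> //|ji]; apply: fix_s.
  by rewrite ltn_neqAle ij andbT; apply: contraNneq ji => /ord_inj ->.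
by exists t; split=> //; split=> // a b ta ab bi; apply: inc => //; lia.
Qed.

Lemma valley_top (i : 'I_m) s : valley i.+1 s -> s i != i -> s ord0 = i :> nat.
Proof.
move=> [fix_s [t [s_t [dec inc]]]] s_i.
set p := s^-1 i; have s_p : s p = i by rewrite permKV.
have p_lt_i : p < i.
  rewrite ltn_neqAle; apply/andP; split.
    by apply: contraNneq s_i => /ord_inj p_i; rewrite -{1}p_i s_p.
  rewrite leqNgt; apply/negP => i_lt_p.
  by move: (i_lt_p); rewrite -(fix_s p i_lt_p) s_p ltnn.
have s_le_i (j : 'I_m) : j <= i -> s j <= i.
  by move=> ji; rewrite -ltnS; apply: fixed_above_lt fix_s _.
case: (posnP p) => [p0 | p_pos]; first by rewrite (_ : ord0 = p) ?s_p //; apply: ord_inj.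
case: (leqP p t) => [p_le_t | t_lt_p].
  have := dec ord0 p p_pos p_le_t; rewrite s_p.
  by have := s_le_i ord0 (leq0n _); lia.
have := inc p i (ltnW t_lt_p) p_lt_i (ltnSn i); rewrite s_p.
by have := s_le_i i (leqnn _); lia.
Qed.

Lemma valley_tau_prefix e k : k <= m -> valley k (tau_prefix e k).
Proof.
elim: k => [|k IH] km; first by rewrite tau_prefix0; exact: valley0.
have V := valleyS (IH (ltnW km)); have -> : k = Ordinal km by [].
rewrite tau_prefixS; case: (e _) => -[|[|//]] _ /=.
  by rewrite expg1; apply: (valley_flip (i := Ordinal km)).
by rewrite expgS expg1 tau_invol mul1g.
Qed.

Lemma valley_tau_prefixP k s : k <= m -> valley k s -> exists e, s = tau_prefix e k.
Proof.
elim: k s => [|k IH] s km V.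
  exists (fun _ => ord0); case: V => fix_s _.
  by apply/permP => j; rewrite tau_prefix0 perm1 fix_s.
move: V; have -> : k = Ordinal km by []; set i := Ordinal km => V.
have [s_i | s_i] := eqVneq (s i) i.
  have [e ->] := IH s (ltnW km) (valley_narrow V s_i).
  exists (fun j => if j == i then ord_max else e j).
  by rewrite tau_prefix_set expgS expg1 tau_invol mul1g.
have s'_i : (tau i * s) i = i.
  apply: ord_inj; rewrite permM (_ : tau i i = ord0) ?(valley_top V s_i) //.
  by apply: ord_inj; rewrite tauE leqnn subnn.
have [e e_s'] := IH _ (ltnW km) (valley_narrow (valley_flip V) s'_i).
exists (fun j => if j == i then ord0 else e j).
by rewrite tau_prefix_set expg1 -e_s' mulgA tau_invol mul1g.
Qed.

End Valleys.

Theorem mainTheorem7 (m : nat) (hm : (1 <= m)%N) (s : {perm 'I_m}) :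
  in_Tm s <-> exists e : 'I_m -> 'I_2, s = tau_prod e.
Proof.
case: m hm s => [//|n] _ s; rewrite in_Tm_valley.
split=> [/(valley_tau_prefixP (leqnn _)) [e ->] | [e ->]].
  by exists e; rewrite tau_prod_prefix.
by rewrite tau_prod_prefix; apply: valley_tau_prefix.
Qed.
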